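(* Let $\mathcal{S}\subseteq\mathbb{R}^n$ and consider a system $\dot x=f(x)$, $y=h(x)$ with $h$ continuous, such that $\mathcal{S}$ is forward invariant, every solution starting in $\mathcal{S}$ is defined for all $t\ge0$, and every such solution converges as $t\to\infty$ to an equilibrium (a point $\bar x\in\mathcal{S}$ with $f(\bar x)=0$). Let $E$ denote the set of equilibria in $\mathcal{S}$. Then the system is detectable on $\mathcal{S}$ if and only if: for all $\bar x,\bar z\in E$, $h(\bar x)=h(\bar z)$ implies $\bar x=\bar z$.
   Context: The system is called detectable (on $\mathcal{S}$) if for every two trajectories $x(\cdot)$ and $z(\cdot)$ in $\mathcal{S}$ defined for all $t\ge 0$, $h(x(t))\equiv h(z(t))$ implies $|x(t)-z(t)|\to0$ as $t\to\infty$. Here $|\cdot|$ is the Euclidean norm. *)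

From HB Require Import structures.
From mathcomp Require Import all_boot all_order all_algebra.
From mathcomp Require Import all_classical all_reals all_analysis.
Set Implicit Arguments. Unset Strict Implicit. Unset Printing Implicit Defensive.
Import Order.TTheory GRing.Theory Num.Theory.
Import numFieldNormedType.Exports.
Local Open Scope classical_set_scope.
Local Open Scope ring_scope.

Section Defs.
Variables (R : realType) (n p : nat).

Definition enorm (v : 'rV[R]_n) : R := Num.sqrt (\sum_(i < n) v ord0 i ^+ 2).

Definition is_solution (f : 'rV[R]_n -> 'rV[R]_n) (x : R -> 'rV[R]_n) : Prop :=
  {within `[0%R, +oo[, continuous x} /\
  (forall t : R, 0 < t -> is_derive t 1 x (f (x t))).

Definition trajectory_in (S : set 'rV[R]_n) (f : 'rV[R]_n -> 'rV[R]_n)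
  (x : R -> 'rV[R]_n) : Prop :=
  is_solution f x /\ (forall t : R, 0 <= t -> S (x t)).

Definition forward_invariant (S : set 'rV[R]_n) (f : 'rV[R]_n -> 'rV[R]_n) : Prop :=
  forall x, is_solution f x -> S (x 0) -> forall t : R, 0 <= t -> S (x t).

Definition equilibria (S : set 'rV[R]_n) (f : 'rV[R]_n -> 'rV[R]_n) : set 'rV[R]_n :=
  [set xb | S xb /\ f xb = 0].

Definition detectable (S : set 'rV[R]_n) (f : 'rV[R]_n -> 'rV[R]_n)
  (h : 'rV[R]_n -> 'rV[R]_p) : Prop :=
  forall x z : R -> 'rV[R]_n, trajectory_in S f x -> trajectory_in S f z ->
    (forall t : R, 0 <= t -> h (x t) = h (z t)) ->
    enorm (x t - z t) @[t --> +oo] --> (0 : R).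

End Defs.

(** Constant trajectories sitting at equilibria are admissible, so detectability
    forces the output map to separate equilibria.  Conversely, two trajectories
    with the same output converge to equilibria whose outputs agree by continuity
    of [h]; if [h] separates equilibria the two limits coincide, hence the
    difference of the trajectories tends to [0]. *)
From HB Require Import structures.
From mathcomp Require Import all_boot all_order all_algebra.
From mathcomp Require Import all_classical all_reals all_analysis.
Set Implicit Arguments. Unset Strict Implicit. Unset Printing Implicit Defensive.
Import Order.TTheory GRing.Theory Num.Theory.
Import numFieldNormedType.Exports.
Local Open Scope classical_set_scope.
Local Open Scope ring_scope.

Lemma cvg_near_eq_image {T : Type} {F : set_system T} {FF : ProperFilter F}
    {U V : topologicalType} (h : U -> V) (x z : T -> U) (a b : U) :
  hausdorff_space V -> {for a, continuous h} -> {for b, continuous h} ->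
  x @ F --> a -> z @ F --> b -> {near F, forall t, h (x t) = h (z t)} ->
  h a = h b.
Proof.
move=> sepV ha hb xa zb hxz.
have hxa : h (x t) @[t --> F] --> h a := cvg_comp _ _ xa ha.
have hxb : h (x t) @[t --> F] --> h b.
  apply: cvg_trans (cvg_comp _ _ zb hb); apply: near_eq_cvg.
  by apply: filterS hxz => t ->.
exact: (cvg_unique sepV) hxa hxb.
Qed.

Section EuclideanNorm.
Variables (R : realType) (n : nat).
Implicit Types v : 'rV[R]_n.

Lemma enorm_continuous : continuous (@enorm R n).
Proof.
move=> v; apply: continuous_comp; last exact: sqrt_continuous.
apply: (@continuous_big _ _ +%R 0 xpredT _ _ _ (fun i (w : 'rV[R]_n) => w ord0 i ^+ 2)) => //.
  exact: add_continuous.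
move=> i _ w; apply: (@continuous_comp _ _ _ (fun w : 'rV[R]_n => w ord0 i) (fun r : R => r ^+ 2)).
  exact: coord_continuous.
exact: exprn_continuous.
Qed.

Lemma enorm0 : enorm (0 : 'rV[R]_n) = 0.
Proof. by rewrite /enorm big1 ?sqrtr0 // => i _; rewrite mxE expr0n. Qed.

Lemma enorm_eq0 v : enorm v = 0 -> v = 0.
Proof.
have coord_sqr_ge0 (i : 'I_n) : true -> 0 <= v ord0 i ^+ 2 := fun=> sqr_ge0 _.
move=> /eqP; rewrite sqrtr_eq0 => sum_le0.
have /eqP : \sum_(i < n) v ord0 i ^+ 2 = 0.
  by apply/eqP; rewrite eq_le sum_le0 sumr_ge0.
rewrite psumr_eq0 // => /allP all_eq0.
apply/rowP => i; rewrite mxE; apply/eqP; rewrite -sqrf_eq0.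
exact: implyP (all_eq0 i (mem_index_enum _)) isT.
Qed.

Lemma enorm_subr_cvg0 {T : Type} {F : set_system T} {FF : Filter F}
    (x z : T -> 'rV[R]_n) (a : 'rV[R]_n) :
  x @ F --> a -> z @ F --> a -> enorm (x t - z t) @[t --> F] --> 0.
Proof.
move=> xa za; rewrite -enorm0 -(subrr a).
apply: (cvg_comp (fun t => x t - z t) (@enorm R n)); first exact: cvgB xa za.
exact: enorm_continuous.
Qed.

End EuclideanNorm.

Section Detectability.
Variables (R : realType) (n p : nat).
Variables (S : set 'rV[R]_n) (f : 'rV[R]_n -> 'rV[R]_n) (h : 'rV[R]_n -> 'rV[R]_p).

Lemma is_solution_cst xb : f xb = 0 -> is_solution f (fun=> xb).
Proof.
move=> fxb0; split; first by apply: continuous_subspaceT => t; exact: cvg_cst.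
by move=> t _; rewrite fxb0; exact: is_derive_cst.
Qed.

Lemma trajectory_in_equilibrium {xb} :
  equilibria S f xb -> trajectory_in S f (fun=> xb).
Proof. by case=> Sxb fxb0; split; [exact: is_solution_cst | move=> t _]. Qed.

Lemma detectable_separates_equilibria : detectable S f h ->
  forall xb zb, equilibria S f xb -> equilibria S f zb -> h xb = h zb -> xb = zb.
Proof.
move=> det xb zb Exb Ezb hxz.
have := det _ _ (trajectory_in_equilibrium Exb) (trajectory_in_equilibrium Ezb).
by move=> /(_ (fun _ _ => hxz)) /(cvg_unique (@norm_hausdorff _ _) (cvg_cst _)) /enorm_eq0 /subr0_eq.
Qed.

Lemma separates_equilibria_detectable : continuous h ->
  (forall x, is_solution f x -> S (x 0) ->
     exists2 xb, equilibria S f xb & x t @[t --> +oo] --> xb) ->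
  (forall xb zb, equilibria S f xb -> equilibria S f zb -> h xb = h zb -> xb = zb) ->
  detectable S f h.
Proof.
move=> hcont conv sep x z [solx Sx] [solz Sz] hxz.
have [xb Exb xxb] := conv x solx (Sx 0 (lexx _)).
have [zb Ezb zzb] := conv z solz (Sz 0 (lexx _)).
have hxbzb : h xb = h zb.
  apply: (cvg_near_eq_image _ (hcont xb) (hcont zb) xxb zzb) => //.
  near=> t; apply: hxz; near: t.
  exact: nbhs_pinfty_ge.
rewrite (sep _ _ Exb Ezb hxbzb) in xxb.
exact: enorm_subr_cvg0 xxb zzb.
Unshelve. all: by end_near.
Qed.

End Detectability.

Theorem lemma1p4 (R : realType) (n p : nat) (S : set 'rV[R]_n)
  (f : 'rV[R]_n -> 'rV[R]_n) (h : 'rV[R]_n -> 'rV[R]_p)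
  (hcont : continuous h)
  (Sinv : forward_invariant S f)
  (conv : forall x : R -> 'rV[R]_n, is_solution f x -> S (x 0) ->
     exists2 xb, equilibria S f xb & x t @[t --> +oo] --> xb) :
  detectable S f h <->
  (forall xb zb, equilibria S f xb -> equilibria S f zb -> h xb = h zb -> xb = zb).
Proof.
split; first exact: detectable_separates_equilibria.
exact: separates_equilibria_detectable.
Qed.
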